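(* There is a bijection $\beta\mapsto g(\beta)$ from the set of left collinearity points of $B$ onto the set of oriented lines in $\mathbb{R}^3$ such that, for all $p,P\in\mathbb{R}^3$, the pseudo spherical condition for $(p,P)$ at $\beta$ holds if and only if $p\in g(\beta)$. Likewise, there is a bijection $\beta\mapsto g(\beta)$ from the set of right collinearity points onto the set of oriented lines such that, for all $p,P\in\mathbb{R}^3$, the pseudo spherical condition for $(p,P)$ at $\beta$ holds if and only if $P\in g(\beta)$.
   Context: Write a direct isometry as $v\mapsto Mv+y$ ($M\in SO(3)$) and put $x=-M^ty$, $r=\langle y,y\rangle$. It corresponds to $(h:M:x:y:r)=(1:m_{11}:\dots:m_{33}:x_1:x_2:x_3:y_1:y_2:y_3:r)\in\mathbb{P}^{16}_{\mathbb{C}}$. $X$ is the complex Zariski closure of all such points. Throughout, $\langle u,u'\rangle=u^tu'$ is the complex bilinear form on $\mathbb{C}^3$. The boundary is $B=X\cap\{h=0\}$. A point $\beta=(0:M:x:y:r)\in B$ with $M=0$ is a left collinearity point if $x\neq0$ and $y=0$, and a right collinearity point if $x=0$ and $y\ne0$. The pseudo spherical condition for $(p,P)$ at $\beta$ is the complex equation $r-2\langle p,x\rangle-2\langle y,P\rangle-2\langle Mp,P\rangle=0$. *)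

From HB Require Import structures.
From mathcomp Require Import all_boot all_order all_algebra.
From mathcomp Require Import reals.
From mathcomp.real_closed Require Import complex.
From mathcomp Require Import mpoly.
Set Implicit Arguments. Unset Strict Implicit. Unset Printing Implicit Defensive.
Import Order.TTheory GRing.Theory Num.Theory.
Local Open Scope ring_scope.

Section Defs.
Variable R : realType.
Local Notation C := (R[i]).

Definition toC (a : R) : C := Complex a 0.
Definition vC (u : 'cV[R]_3) : 'cV[C]_3 := map_mx toC u.

(* the complex bilinear form <u,u'> = u^t u' on C^3 (no conjugation) *)
Definition cdot (u u' : 'cV[C]_3) : C := (u^T *m u') 0 0.
Definition rdot (u u' : 'cV[R]_3) : R := (u^T *m u') 0 0.

(* homogeneous coordinates (h : m11 : m12 : ... : m33 : x1:x2:x3 : y1:y2:y3 : r)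
   of P^16_C, represented by (nonzero) row vectors of length 17 *)
Definition mkpt (h : C) (M : 'M[C]_3) (x y : 'cV[C]_3) (r : C) : 'rV[C]_17 :=
  \row_(k < 17)
    (if (k == 0 :> nat) then h
     else if (k < 10)%N then M (inord ((k - 1) %/ 3)) (inord ((k - 1) %% 3))
     else if (k < 13)%N then x (inord (k - 10)) 0
     else if (k < 16)%N then y (inord (k - 13)) 0
     else r).

Definition ph (v : 'rV[C]_17) : C := v 0 (inord 0).
Definition pM (v : 'rV[C]_17) : 'M[C]_3 := \matrix_(i < 3, j < 3) v 0 (inord (1 + 3 * i + j)).
Definition px (v : 'rV[C]_17) : 'cV[C]_3 := \col_(i < 3) v 0 (inord (10 + i)).
Definition py (v : 'rV[C]_17) : 'cV[C]_3 := \col_(i < 3) v 0 (inord (13 + i)).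
Definition pr (v : 'rV[C]_17) : C := v 0 (inord 16).

Definition proj_eq (v w : 'rV[C]_17) : Prop := exists2 c : C, c != 0 & w = c *: v.

Definition is_rot (M : 'M[R]_3) : Prop := M^T *m M = 1%:M /\ \det M = 1.

(* the point of P^16 attached to the direct isometry v |-> M v + y *)
Definition iso_pt (M : 'M[R]_3) (y : 'cV[R]_3) : 'rV[C]_17 :=
  mkpt 1 (map_mx toC M) (vC (- (M^T *m y))) (vC y) (toC (rdot y y)).

(* X : projective Zariski closure of the set of points iso_pt M y :
   a point lies in X iff every homogeneous polynomial vanishing on all
   iso_pt M y vanishes on it *)
Definition inX (v : 'rV[C]_17) : Prop :=
  v != 0 /\
  forall (d : nat) (F : mpoly.mpoly 17 C),
    F \is @mpoly.ishomog1 17 C d (@mpoly.mdeg 17) ->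
    (forall M y, is_rot M -> mpoly.meval (fun k => iso_pt M y 0 k) F = 0) ->
    mpoly.meval (fun k => v 0 k) F = 0.

Definition inB (v : 'rV[C]_17) : Prop := inX v /\ ph v = 0.

Definition left_coll (v : 'rV[C]_17) : Prop :=
  inB v /\ pM v = 0 /\ px v != 0 /\ py v = 0.
Definition right_coll (v : 'rV[C]_17) : Prop :=
  inB v /\ pM v = 0 /\ px v = 0 /\ py v != 0.

Definition pseudo_sph (b : 'rV[C]_17) (p P : 'cV[R]_3) : Prop :=
  pr b - 2%:R * cdot (vC p) (px b) - 2%:R * cdot (py b) (vC P)
       - 2%:R * cdot (pM b *m vC p) (vC P) = 0.

(* oriented lines in R^3, in normal form (d, a): d a unit direction vector,
   a the foot of the perpendicular from the origin (a ⟂ d); the line is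
   {a + t d | t in R} oriented by d. *)
Definition oline : Type :=
  {da : 'cV[R]_3 * 'cV[R]_3 | (rdot da.1 da.1 == 1) && (rdot da.1 da.2 == 0)}.

Definition on_line (p : 'cV[R]_3) (l : oline) : Prop :=
  exists t : R, p = (val l).2 + t *: (val l).1.

End Defs.

From HB Require Import structures.
From mathcomp Require Import all_boot all_order all_algebra.
From mathcomp Require Import reals.
From mathcomp.real_closed Require Import complex.
From mathcomp Require Import mpoly.
From mathcomp Require Import ring lra.
Import Order.TTheory GRing.Theory Num.Theory.
Set Implicit Arguments. Unset Strict Implicit. Unset Printing Implicit Defensive.
Local Open Scope complex_scope.
Local Open Scope ring_scope.

(* Every collinearity point is (0:0:x:0:r) (left) or (0:0:0:x:r) (right) with x a
   nonzero isotropic vector of C^3, because X lies on the quadric <x,x> = h r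
   (resp. <y,y> = h r).  Conversely every such point lies in X.  Cayley's rational
   parametrization q |-> ((1 - <q,q>) I + 2 q q^t + 2 [q]_x) / (1 + <q,q>) of SO(3)
   shows that the polynomials defining X vanish on the points it produces for complex
   q and y (a polynomial vanishing on the real points of a complex line vanishes on
   the line); substituting q = k/s with k isotropic and clearing denominators, the
   limit s = 0 sweeps out all the points above.
   Writing x = u + i v, isotropy says that u and v are orthogonal of the same nonzero
   length, and the real and imaginary parts of the pseudo spherical condition
   r = 2<p,x> say that p lies on the line through ((Re r) u + (Im r) v) / (2 |u|^2)
   with direction u x v.  Orienting it by u x v, this line determines (x, r) up to a
   common nonzero complex factor, i.e. it determines the projective point. *)

(** * Coordinates *)

Definition i0 : 'I_3 := @Ordinal 3 0 isT.
Definition i1 : 'I_3 := @Ordinal 3 1 isT.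
Definition i2 : 'I_3 := @Ordinal 3 2 isT.

Lemma ord3P (P : 'I_3 -> Prop) : P i0 -> P i1 -> P i2 -> forall i, P i.
Proof.
move=> H0 H1 H2 [[|[|[|m]]] Hm] //.
- by rewrite (_ : Ordinal Hm = i0) //; apply: val_inj.
- by rewrite (_ : Ordinal Hm = i1) //; apply: val_inj.
- by rewrite (_ : Ordinal Hm = i2) //; apply: val_inj.
Qed.

Lemma sum3 (V : nmodType) (f : 'I_3 -> V) : \sum_(i < 3) f i = f i0 + f i1 + f i2.
Proof.
rewrite !big_ord_recr big_ord0 /= add0r.
by congr (f _ + f _ + f _); apply: val_inj.
Qed.

Lemma inord3_0 : inord 0 = i0. Proof. by apply: val_inj; rewrite /= inordK. Qed.
Lemma inord3_1 : inord 1 = i1. Proof. by apply: val_inj; rewrite /= inordK. Qed.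
Lemma inord3_2 : inord 2 = i2. Proof. by apply: val_inj; rewrite /= inordK. Qed.

Ltac ord3s := rewrite ?inord3_0 ?inord3_1 ?inord3_2.

Lemma cV3_eq (T : pzRingType) (u w : 'cV[T]_3) :
  u i0 0 = w i0 0 -> u i1 0 = w i1 0 -> u i2 0 = w i2 0 -> u = w.
Proof.
by move=> h0 h1 h2; apply/matrixP => i j; rewrite (ord1 j); move: i; exact: ord3P.
Qed.

(* [mkpt] and its coordinate projections over an arbitrary ring, so that they commute
   with ring morphisms such as polynomial evaluation. *)
Definition mkptT (T : pzRingType) (h : T) (M : 'M[T]_3) (x y : 'cV[T]_3) (r : T) :
    'rV[T]_17 :=
  \row_(k < 17)
    (if (k == 0 :> nat) then h
     else if (k < 10)%N then M (inord ((k - 1) %/ 3)) (inord ((k - 1) %% 3))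
     else if (k < 13)%N then x (inord (k - 10)) 0
     else if (k < 16)%N then y (inord (k - 13)) 0
     else r).
Definition phT (T : pzRingType) (v : 'rV[T]_17) : T := v 0 (inord 0).
Definition pMT (T : pzRingType) (v : 'rV[T]_17) : 'M[T]_3 :=
  \matrix_(i < 3, j < 3) v 0 (inord (1 + 3 * i + j)).
Definition pxT (T : pzRingType) (v : 'rV[T]_17) : 'cV[T]_3 := \col_(i < 3) v 0 (inord (10 + i)).
Definition pyT (T : pzRingType) (v : 'rV[T]_17) : 'cV[T]_3 := \col_(i < 3) v 0 (inord (13 + i)).
Definition prT (T : pzRingType) (v : 'rV[T]_17) : T := v 0 (inord 16).

Lemma mkptE (R : realType) : @mkpt R = @mkptT R[i]. Proof. by []. Qed.
Lemma phE (R : realType) : @ph R = @phT R[i]. Proof. by []. Qed.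
Lemma pME (R : realType) : @pM R = @pMT R[i]. Proof. by []. Qed.
Lemma pxE (R : realType) : @px R = @pxT R[i]. Proof. by []. Qed.
Lemma pyE (R : realType) : @py R = @pyT R[i]. Proof. by []. Qed.
Lemma prE (R : realType) : @pr R = @prT R[i]. Proof. by []. Qed.

Section PointCoordinates.
Variables (T : pzRingType) (h : T) (M : 'M[T]_3) (x y : 'cV[T]_3) (r : T).

Lemma ph_mk : phT (mkptT h M x y r) = h.
Proof. by rewrite /phT mxE inordK. Qed.

Lemma pr_mk : prT (mkptT h M x y r) = r.
Proof. by rewrite /prT mxE inordK. Qed.

Lemma px_mk : pxT (mkptT h M x y r) = x.
Proof.
by apply/matrixP => i j; rewrite (ord1 j) !mxE; move: i; apply: ord3P;
  rewrite inordK //= ?subnn; ord3s.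
Qed.

Lemma py_mk : pyT (mkptT h M x y r) = y.
Proof.
by apply/matrixP => i j; rewrite (ord1 j) !mxE; move: i; apply: ord3P;
  rewrite inordK //= ?subnn; ord3s.
Qed.

Lemma pM_mk : pMT (mkptT h M x y r) = M.
Proof.
by apply/matrixP => i j; rewrite !mxE; move: i; apply: ord3P; move: j; apply: ord3P;
  rewrite inordK //=; ord3s.
Qed.

End PointCoordinates.

Lemma mkptT_eta (T : pzRingType) (v : 'rV[T]_17) :
  v = mkptT (phT v) (pMT v) (pxT v) (pyT v) (prT v).
Proof.
apply/matrixP => i k; rewrite (ord1 i) !mxE; case: k => m Hm.
do 17 (case: m Hm => [|m] Hm;
  [ rewrite /= ?mxE; congr (v 0 _); apply: val_inj; rewrite /= ?inordK // | ]).
by [].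
Qed.

Lemma scale_mkptT (T : pzRingType) (c h : T) M (x y : 'cV[T]_3) r :
  c *: mkptT h M x y r = mkptT (c * h) (c *: M) (c *: x) (c *: y) (c * r).
Proof. by apply/matrixP => i k; rewrite !mxE; repeat case: ifP; rewrite ?mxE. Qed.

Lemma map_mkptT (T S : pzRingType) (f : {rmorphism T -> S}) h M (x y : 'cV[T]_3) r :
  map_mx f (mkptT h M x y r) =
  mkptT (f h) (map_mx f M) (map_mx f x) (map_mx f y) (f r).
Proof. by apply/matrixP => i k; rewrite !mxE; repeat case: ifP; rewrite ?mxE. Qed.

Lemma pxZ (R : realType) (c : R[i]) b : px (c *: b) = c *: px b.
Proof. by apply/matrixP => i j; rewrite !mxE. Qed.

Lemma pyZ (R : realType) (c : R[i]) b : py (c *: b) = c *: py b.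
Proof. by apply/matrixP => i j; rewrite !mxE. Qed.

Lemma prZ (R : realType) (c : R[i]) b : pr (c *: b) = c * pr b.
Proof. by rewrite /pr mxE. Qed.

(** * Vectors of R^3 and C^3 *)

Lemma trmxZ (T : pzRingType) m n (a : T) (A : 'M[T]_(m, n)) : (a *: A)^T = a *: A^T.
Proof. by apply/matrixP => i j; rewrite !mxE. Qed.

Definition dotT (T : pzRingType) (u w : 'cV[T]_3) : T := (u^T *m w) 0 0.

Lemma cdotE (R : realType) : @cdot R = @dotT R[i]. Proof. by []. Qed.
Lemma rdotE (R : realType) : @rdot R = @dotT R. Proof. by []. Qed.

Section Dot.
Variable T : comPzRingType.
Implicit Types (u v w : 'cV[T]_3) (a b : T).

Lemma dotE u w : dotT u w = u i0 0 * w i0 0 + u i1 0 * w i1 0 + u i2 0 * w i2 0.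
Proof. by rewrite /dotT mxE sum3 !mxE. Qed.

Lemma dotC u w : dotT u w = dotT w u. Proof. by rewrite !dotE; ring. Qed.
Lemma dotDl u v w : dotT (u + v) w = dotT u w + dotT v w.
Proof. by rewrite !dotE !mxE; ring. Qed.
Lemma dotDr u v w : dotT w (u + v) = dotT w u + dotT w v.
Proof. by rewrite !dotE !mxE; ring. Qed.
Lemma dotBl u v w : dotT (u - v) w = dotT u w - dotT v w.
Proof. by rewrite !dotE !mxE; ring. Qed.
Lemma dotBr u v w : dotT w (u - v) = dotT w u - dotT w v.
Proof. by rewrite !dotE !mxE; ring. Qed.
Lemma dotNr u w : dotT w (- u) = - dotT w u.
Proof. by rewrite !dotE !mxE; ring. Qed.
Lemma dotNN u w : dotT (- u) (- w) = dotT u w.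
Proof. by rewrite !dotE !mxE; ring. Qed.
Lemma dotZl a u w : dotT (a *: u) w = a * dotT u w.
Proof. by rewrite !dotE !mxE; ring. Qed.
Lemma dotZr a u w : dotT w (a *: u) = a * dotT w u.
Proof. by rewrite !dotE !mxE; ring. Qed.
Lemma dot0l w : dotT 0 w = 0. Proof. by rewrite !dotE !mxE; ring. Qed.
Lemma dot0r w : dotT w 0 = 0. Proof. by rewrite !dotE !mxE; ring. Qed.

Lemma dot_orthogonal (M : 'M[T]_3) u w : M^T *m M = 1%:M ->
  dotT (M *m u) (M *m w) = dotT u w.
Proof. by move=> hM; rewrite /dotT trmx_mul -mulmxA (mulmxA M^T) hM mul1mx. Qed.

Definition crossv u v : 'cV[T]_3 :=
  \col_(i < 3) (if (i == 0 :> nat) then u i1 0 * v i2 0 - u i2 0 * v i1 0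
                else if (i == 1 :> nat) then u i2 0 * v i0 0 - u i0 0 * v i2 0
                else u i0 0 * v i1 0 - u i1 0 * v i0 0).

Lemma dot_cross_l u v : dotT (crossv u v) u = 0.
Proof. by rewrite dotE !mxE /=; ring. Qed.

Lemma dot_cross_r u v : dotT (crossv u v) v = 0.
Proof. by rewrite dotE !mxE /=; ring. Qed.

Lemma dot_cross_cross u v :
  dotT (crossv u v) (crossv u v) = dotT u u * dotT v v - dotT u v ^+ 2.
Proof. by rewrite !dotE !mxE /=; ring. Qed.

Lemma cross_lin a b c e u v :
  crossv (a *: u + b *: v) (c *: u + e *: v) = (a * e - b * c) *: crossv u v.
Proof. by apply: cV3_eq; rewrite !mxE /=; ring. Qed.

Lemma cross_cross u d : crossv u (crossv d u) = dotT u u *: d - dotT u d *: u.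
Proof. by apply: cV3_eq; rewrite !dotE !mxE /=; ring. Qed.

Lemma cross_frame u v w (i : 'I_3) :
  w i 0 * dotT (crossv u v) (crossv u v) =
  crossv (crossv u v) u i 0 * dotT w v - crossv (crossv u v) v i 0 * dotT w u
  + crossv u v i 0 * dotT (crossv u v) w.
Proof. by move: i; apply: ord3P; rewrite !dotE !mxE /=; ring. Qed.

End Dot.

Lemma rmorph_dotT (T S : comPzRingType) (f : {rmorphism T -> S}) u w :
  f (dotT u w) = dotT (map_mx f u) (map_mx f w).
Proof. by rewrite !dotE !mxE !rmorphD !rmorphM. Qed.

Lemma orthogonal_cross_eq0 (F : idomainType) (u v w : 'cV[F]_3) :
  dotT w u = 0 -> dotT w v = 0 -> dotT (crossv u v) w = 0 ->
  dotT (crossv u v) (crossv u v) != 0 -> w = 0.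
Proof.
move=> wu wv wuv huv; apply/matrixP => i j; rewrite (ord1 j) mxE.
have := cross_frame u v w i; rewrite wu wv wuv !mulr0 subrr add0r => /eqP.
by rewrite mulf_eq0 (negbTE huv) orbF => /eqP.
Qed.

Definition reV (R : realType) (z : 'cV[R[i]]_3) : 'cV[R]_3 := \col_i complex.Re (z i 0).
Definition imV (R : realType) (z : 'cV[R[i]]_3) : 'cV[R]_3 := \col_i complex.Im (z i 0).
Definition cplx (R : realType) (u v : 'cV[R]_3) : 'cV[R[i]]_3 :=
  \col_i (Complex (u i 0) (v i 0)).

Section ComplexVectors.
Variable R : realType.
Implicit Types (u v : 'cV[R]_3) (z : 'cV[R[i]]_3).

Lemma cplx_eta z : cplx (reV z) (imV z) = z.
Proof. by apply/matrixP => i j; rewrite (ord1 j) !mxE; case: (z i 0). Qed.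

Lemma reV_cplx u v : reV (cplx u v) = u.
Proof. by apply/matrixP => i j; rewrite (ord1 j) !mxE. Qed.

Lemma imV_cplx u v : imV (cplx u v) = v.
Proof. by apply/matrixP => i j; rewrite (ord1 j) !mxE. Qed.

Lemma vC_cplx u : vC u = cplx u 0.
Proof. by apply/matrixP => i j; rewrite (ord1 j) !mxE. Qed.

Lemma conj_cplx u v : map_mx conjc (cplx u v) = cplx u (- v).
Proof. by apply/matrixP => i j; rewrite !mxE. Qed.

Lemma dot_cplx u v u' v' :
  dotT (cplx u v) (cplx u' v') =
  Complex (dotT u u' - dotT v v') (dotT u v' + dotT v u').
Proof.
by rewrite !dotE !mxE -[LHS]/(Complex _ _); congr Complex; ring.
Qed.

Lemma scale_cplx (c1 c2 : R) u v :
  Complex c1 c2 *: cplx u v = cplx (c1 *: u - c2 *: v) (c2 *: u + c1 *: v).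
Proof.
by apply/matrixP => i j; rewrite !mxE -[LHS]/(Complex _ _); congr Complex; ring.
Qed.

End ComplexVectors.

Lemma dot_self_ge0 (R : realDomainType) (u : 'cV[R]_3) : 0 <= dotT u u.
Proof. by rewrite dotE; nra. Qed.

Lemma dot_self_eq0 (R : realDomainType) (u : 'cV[R]_3) : dotT u u = 0 -> u = 0.
Proof. by rewrite dotE => h; apply: cV3_eq; rewrite mxE; nra. Qed.

Lemma dot_conj_neq0 (R : realType) (x : 'cV[R[i]]_3) :
  x != 0 -> dotT x (map_mx conjc x) != 0.
Proof.
rewrite -(cplx_eta x) conj_cplx; move: (reV x) (imV x) => u v.
apply: contra; rewrite dot_cplx eq_complex /= dotNr opprK => /andP[/eqP huv _].
have := dot_self_ge0 u; have := dot_self_ge0 v => hv hu.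
have -> : u = 0 by apply: dot_self_eq0; lra.
have -> : v = 0 by apply: dot_self_eq0; lra.
by apply/eqP/matrixP => i j; rewrite !mxE.
Qed.

Lemma isotropic_cplx (R : realType) (u v : 'cV[R]_3) :
  dotT (cplx u v) (cplx u v) = 0 -> cplx u v != 0 ->
  [/\ dotT u u = dotT v v, dotT u v = 0 & dotT u u != 0].
Proof.
rewrite dot_cplx => /eqP; rewrite eq_complex /= => /andP[/eqP h1 /eqP h2] hz.
have huv : dotT u v = 0 by move: h2; rewrite (dotC v u); lra.
have huu : dotT u u = dotT v v by lra.
split=> //; apply: contra_neq hz => /dot_self_eq0 hu.
have hv : v = 0 by apply: dot_self_eq0; rewrite -huu hu dot0l.
by apply/matrixP => i j; rewrite !mxE hu hv !mxE.
Qed.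

(** * Cayley's parametrization of SO(3) *)

Lemma det_mx33 (T : comPzRingType) (A : 'M[T]_3) :
  \det A = A i0 i0 * (A i1 i1 * A i2 i2 - A i1 i2 * A i2 i1)
         - A i0 i1 * (A i1 i0 * A i2 i2 - A i1 i2 * A i2 i0)
         + A i0 i2 * (A i1 i0 * A i2 i1 - A i1 i1 * A i2 i0).
Proof.
have ->: A = \matrix_(i < 3, j < 3) A (inord i) (inord j).
  by apply/matrixP => i j; rewrite mxE !inord_val.
rewrite (expand_det_row _ i0) sum3 /cofactor.
rewrite !(expand_det_row _ ord0) !big_ord_recr !big_ord0 /= /cofactor !det_mx11 !mxE /=.
ring.
Qed.

(* Entry (i, j) of the matrix [[(a, b, c)]_x] of [v |-> (a, b, c) x v]. *)
Definition skew_entry (T : pzRingType) (a b c : T) (i j : nat) : T :=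
  match i, j with
  | 0, 1 => - c | 0, 2 => b | 1, 0 => c | 1, 2 => - a | 2, 0 => - b | 2, 1 => a
  | _, _ => 0 end.

Lemma rmorph_skew_entry (T S : pzRingType) (f : {rmorphism T -> S}) a b c i j :
  f (skew_entry a b c i j) = skew_entry (f a) (f b) (f c) i j.
Proof.
by case: i => [|[|[|i]]]; case: j => [|[|[|j]]]; rewrite /= ?rmorphN ?rmorph0.
Qed.

Lemma skew_entryZ (T : comPzRingType) (k a b c : T) i j :
  skew_entry (k * a) (k * b) (k * c) i j = k * skew_entry a b c i j.
Proof.
by case: i => [|[|[|i]]]; case: j => [|[|[|j]]]; rewrite /= ?mulrN ?mulr0.
Qed.

Definition cayley_gen (T : pzRingType) (a b : T) (q : 'cV[T]_3) : 'M[T]_3 :=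
  \matrix_(i < 3, j < 3) ((if (i == j :> nat) then a else 0) + 2 * q i 0 * q j 0
       + b * skew_entry (q i0 0) (q i1 0) (q i2 0) i j).

Lemma map_cayley_gen (T S : pzRingType) (f : {rmorphism T -> S}) a b q :
  map_mx f (cayley_gen a b q) = cayley_gen (f a) (f b) (map_mx f q).
Proof.
apply/matrixP => i j; rewrite !mxE !rmorphD !rmorphM rmorph_skew_entry rmorph_nat ?mxE.
by case: ifP; rewrite ?rmorph0.
Qed.

Definition cayley_den (T : pzRingType) (q : 'cV[T]_3) : T := 1 + dotT q q.
Definition cayley_num (T : pzRingType) (q : 'cV[T]_3) : 'M[T]_3 :=
  cayley_gen (1 - dotT q q) 2 q.

Lemma cayley_num_orthogonal (T : comPzRingType) (q : 'cV[T]_3) :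
  (cayley_num q)^T *m cayley_num q = (cayley_den q ^+ 2)%:M.
Proof.
rewrite /cayley_num /cayley_den dotE.
apply/matrixP => i j; rewrite !mxE sum3 !mxE.
by move: i; apply: ord3P; move: j; apply: ord3P; rewrite /= ?mulr1n ?mulr0n; ring.
Qed.

Lemma det_cayley_num (T : comPzRingType) (q : 'cV[T]_3) :
  \det (cayley_num q) = cayley_den q ^+ 3.
Proof. by rewrite det_mx33 /cayley_num /cayley_den dotE !mxE /=; ring. Qed.

Lemma cayley_den_gt0 (R : realType) (q : 'cV[R]_3) : 0 < cayley_den q.
Proof. by rewrite /cayley_den dotE; nra. Qed.

Lemma is_rot_cayley (R : realType) (q : 'cV[R]_3) :
  is_rot ((cayley_den q)^-1 *: cayley_num q).
Proof.
have hD : cayley_den q != 0 by rewrite gt_eqF // cayley_den_gt0.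
split; last by rewrite detZ det_cayley_num; field.
rewrite trmxZ -scalemxAl -scalemxAr scalerA cayley_num_orthogonal scale_scalar_mx.
by congr (_ %:M); field.
Qed.

(** * Collinearity points *)

Lemma meval_horner (C : comNzRingType) n (F : {mpoly C[n]}) (h : 'I_n -> {poly C}) z :
  (mmap polyC h F).[z] = meval (fun i => (h i).[z]) F.
Proof.
rewrite /meval /mmap horner_sum; apply: eq_bigr => m _.
rewrite hornerM hornerC /mmap1 horner_prod; congr (_ * _).
by apply: eq_bigr => i _; rewrite horner_exp.
Qed.

(* [F] composed with the curve is a univariate polynomial with infinitely many roots. *)
Lemma meval_curve_eq0 (C : numFieldType) n (F : {mpoly C[n]}) (h : 'I_n -> {poly C}) :
  (forall k : nat, meval (fun i => (h i).[k.+1%:R]) F = 0) ->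
  forall z, meval (fun i => (h i).[z]) F = 0.
Proof.
move=> F0 z; rewrite -meval_horner.
suff ->: mmap polyC h F = 0 by rewrite horner0.
apply/eqP; apply/negPn/negP => nz.
set p := mmap polyC h F.
have := max_poly_roots nz (rs := [seq (k.+1)%:R | k <- iota 0 (size p)]).
rewrite size_map size_iota ltnn => roots_lt; suff: false by []; apply: roots_lt.
  by apply/allP => _ /mapP [k _ ->]; rewrite /root meval_horner F0.
by rewrite map_inj_uniq ?iota_uniq // => a b /eqP; rewrite eqr_nat eqSS => /eqP.
Qed.

Lemma meval_homog (C : comNzRingType) n d (F : {mpoly C[n]}) (c : C) (v : 'I_n -> C) :
  F \is @ishomog1 n C d (@mdeg n) ->
  meval (fun i => c * v i) F = c ^+ d * meval v F.
Proof.
move=> /dhomogP hF; rewrite !mevalE big_distrr /= big_seq [RHS]big_seq.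
apply: eq_bigr => m /hF <-; rewrite mulrCA; congr (_ * _).
transitivity (c ^+ (\sum_i m i)%N * \prod_(i < n) v i ^+ m i); last first.
  by congr (_ ^+ _ * _); rewrite -mdegE.
rewrite (eq_bigr (fun i => c ^+ m i * v i ^+ m i)); last by move=> i _; rewrite exprMn.
by rewrite big_split /= prodrXr.
Qed.

Lemma meval_scale (C : comNzRingType) n d (F : {mpoly C[n]}) (c : C) (v : 'rV[C]_n) :
  F \is @ishomog1 n C d (@mdeg n) ->
  meval (fun k => (c *: v) 0 k) F = c ^+ d * meval (fun k => v 0 k) F.
Proof. by move=> hF; rewrite -meval_homog //; apply: meval_eq => k; rewrite mxE. Qed.

Definition vanish_iso (R : realType) (F : {mpoly R[i][17]}) : Prop :=
  forall M y, is_rot M -> meval (fun k => iso_pt M y 0 k) F = 0.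

(* [cayley_den q] times the point of [v |-> M v + y] ([side = false]) or of
   [v |-> M v - M y] ([side = true]), [M] the Cayley rotation of [q] when [q] is real
   ([cayley_pt_iso]). *)
Definition cayley_pt (T : pzRingType) (side : bool) (q y : 'cV[T]_3) : 'rV[T]_17 :=
  if side then
    mkptT (cayley_den q) (cayley_num q) (cayley_den q *: y) (- (cayley_num q *m y))
      (cayley_den q * dotT y y)
  else
    mkptT (cayley_den q) (cayley_num q) (- ((cayley_num q)^T *m y)) (cayley_den q *: y)
      (cayley_den q * dotT y y).

Lemma map_cayley_pt (T S : comPzRingType) (f : {rmorphism T -> S}) side q y :
  map_mx f (cayley_pt side q y) = cayley_pt side (map_mx f q) (map_mx f y).
Proof.
rewrite /cayley_pt /cayley_den /cayley_num; case: side;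
  by rewrite map_mkptT ?map_mxN ?map_mxM -?map_trmx !map_mxZ !map_cayley_gen
    !rmorphM !rmorphD ?rmorphN ?rmorphB !rmorph1 !rmorph_dotT.
Qed.

Lemma cayley_pt_iso (R : realType) side (q y : 'cV[R]_3) :
  exists2 M, is_rot M & exists y',
    cayley_pt side q y = cayley_den q *: mkptT 1 M (- (M^T *m y')) y' (dotT y' y').
Proof.
have hD : cayley_den q != 0 by rewrite gt_eqF // cayley_den_gt0.
have [M hM eN] : exists2 M, is_rot M & cayley_num q = cayley_den q *: M.
  exists ((cayley_den q)^-1 *: cayley_num q); first exact: is_rot_cayley.
  by rewrite scalerA divff // scale1r.
exists M => //; case: side; [exists (- (M *m y)) | exists y];
  rewrite /cayley_pt scale_mkptT mulr1 eN.
- congr (mkptT _ _ _ _ _).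
  + by rewrite mulmxN opprK mulmxA (proj1 hM) mul1mx.
  + by rewrite -scalemxAl scalerN.
  + by rewrite dotNN dot_orthogonal // (proj1 hM).
- by rewrite trmxZ -scalemxAl scalerN.
Qed.

Lemma vanish_cayley_pt_real (R : realType) side (q y : 'cV[R]_3) d (F : {mpoly R[i][17]}) :
  F \is @ishomog1 17 R[i] d (@mdeg 17) -> vanish_iso F ->
  meval (fun k => cayley_pt side (vC q) (vC y) 0 k) F = 0.
Proof.
move=> hF hV.
have -> : cayley_pt side (vC q) (vC y) = map_mx (real_complex R) (cayley_pt side q y).
  by rewrite map_cayley_pt.
have [M hM [y' ->]] := cayley_pt_iso side q y.
rewrite map_mxZ map_mkptT rmorph1 (meval_scale _ _ hF).
by have := hV M y' hM; rewrite /iso_pt mkptE /vC map_mxN => ->; rewrite mulr0.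
Qed.

(* The complex line [t |-> Re z + t Im z], which passes through [z] at [t = 'i]. *)
Definition re_im_poly (R : realType) (z : 'cV[R[i]]_3) : 'cV[{poly R[i]}]_3 :=
  \col_i ((complex.Re (z i 0))%:C%:P + (complex.Im (z i 0))%:C%:P * 'X).

Lemma re_im_poly_nat (R : realType) (z : 'cV[R[i]]_3) (n : nat) :
  map_mx (horner_eval (n%:R : R[i])) (re_im_poly z) =
  vC (\col_i (complex.Re (z i 0) + n%:R * complex.Im (z i 0))).
Proof.
apply/matrixP => i j; rewrite !mxE horner_evalE hornerD hornerM !hornerC hornerX.
by rewrite -[toC _]/((_ + _)%:C) rmorphD rmorphM rmorph_nat mulrC.
Qed.

Lemma re_im_poly_i (R : realType) (z : 'cV[R[i]]_3) :
  map_mx (horner_eval ('i : R[i])) (re_im_poly z) = z.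
Proof.
apply/matrixP => i j; rewrite !mxE horner_evalE hornerD hornerM !hornerC hornerX (ord1 j).
by rewrite mulrC -complexE.
Qed.

Lemma vanish_cayley_pt (R : realType) side (q y : 'cV[R[i]]_3) d (F : {mpoly R[i][17]}) :
  F \is @ishomog1 17 R[i] d (@mdeg 17) -> vanish_iso F ->
  meval (fun k => cayley_pt side q y 0 k) F = 0.
Proof.
move=> hF hV.
set c := fun k => cayley_pt side (re_im_poly q) (re_im_poly y) 0 k.
have Ec w : meval (fun k => (c k).[w]) F = meval (fun k =>
    cayley_pt side (map_mx (horner_eval w) (re_im_poly q))
      (map_mx (horner_eval w) (re_im_poly y)) 0 k) F.
  by rewrite -map_cayley_pt; apply: meval_eq => k; rewrite mxE.
rewrite -[q]re_im_poly_i -[y]re_im_poly_i -Ec.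
apply: (meval_curve_eq0 (h := c)) => n.
by rewrite Ec !re_im_poly_nat (vanish_cayley_pt_real _ _ _ hF hV).
Qed.

(* For [s != 0] and isotropic [k], [y0] this is [s ^+ 6] times a Cayley point
   ([cayley_curve_pt]); at [s = 0] it is a collinearity point ([cayley_curve0]). *)
Definition cayley_curve (T : pzRingType) (side : bool) (s : T) (k y0 w : 'cV[T]_3) :
    'rV[T]_17 :=
  let N := cayley_gen (s ^+ 2) (2 * s) k in
  let y := y0 + s ^+ 2 *: w in
  let r := 2 * dotT y0 w + s ^+ 2 * dotT w w in
  if side then mkptT (s ^+ 6) (s ^+ 4 *: N) (s ^+ 2 *: y) (- (N *m y)) r
  else mkptT (s ^+ 6) (s ^+ 4 *: N) (- (N^T *m y)) (s ^+ 2 *: y) r.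

Definition coll_pt (T : pzRingType) (side : bool) (X : 'cV[T]_3) (r : T) : 'rV[T]_17 :=
  if side then mkptT 0 0 0 X r else mkptT 0 0 X 0 r.

Lemma map_cayley_curve (T S : comPzRingType) (f : {rmorphism T -> S}) side s k y0 w :
  map_mx f (cayley_curve side s k y0 w) =
  cayley_curve side (f s) (map_mx f k) (map_mx f y0) (map_mx f w).
Proof.
rewrite /cayley_curve; case: side; rewrite map_mkptT ?map_mxN ?map_mxM -?map_trmx
  !map_mxZ !map_mxD ?map_mxZ ?map_cayley_gen ?rmorphXn ?rmorphD ?rmorphXn ?rmorphM
  ?rmorphXn ?rmorph_dotT ?rmorph_nat ?rmorph1 //.
Qed.

Lemma cayley_curve_pt (F : fieldType) side (s : F) k y0 w :
  s != 0 -> dotT k k = 0 -> dotT y0 y0 = 0 ->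
  cayley_curve side s k y0 w =
  s ^+ 6 *: cayley_pt side (s^-1 *: k) (s ^- 4 *: (y0 + s ^+ 2 *: w)).
Proof.
move=> hs hk hy.
have hD : cayley_den (s^-1 *: k) = 1 by rewrite /cayley_den dotZl dotZr hk !mulr0 addr0.
have hN : cayley_num (s^-1 *: k) = s ^- 2 *: cayley_gen (s ^+ 2) (2 * s) k.
  apply/matrixP => i j; rewrite /cayley_num dotZl dotZr hk !mulr0 subr0 !mxE skew_entryZ.
  by case: ifP => _; field.
have hr : s ^+ 6 * (1 * dotT (s ^- 4 *: (y0 + s ^+ 2 *: w)) (s ^- 4 *: (y0 + s ^+ 2 *: w)))
   = 2 * dotT y0 w + s ^+ 2 * dotT w w.
  by rewrite dotZl dotZr !dotDl !dotDr !dotZl !dotZr hy (dotC w y0); field.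
rewrite /cayley_pt /cayley_curve hD hN; case: side; rewrite scale_mkptT mulr1 hr !scale1r
  !scalerA.
- congr (mkptT _ _ _ _ _); try by congr (_ *: _); field.
  rewrite scalerN -scalemxAl -scalemxAr !scalerA; congr (- _).
  by rewrite -[LHS]scale1r; congr (_ *: _); field.
- congr (mkptT _ _ _ _ _); try by congr (_ *: _); field.
  rewrite trmxZ scalerN -scalemxAl -scalemxAr !scalerA; congr (- _).
  by rewrite -[LHS]scale1r; congr (_ *: _); field.
Qed.

Lemma cayley_curve0 (T : comNzRingType) side (k y0 w : 'cV[T]_3) :
  cayley_curve side 0 k y0 w = coll_pt side (- (2 * dotT k y0) *: k) (2 * dotT y0 w).
Proof.
rewrite /cayley_curve /coll_pt !expr0n /= !scale0r addr0 mul0r addr0.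
have E : cayley_gen 0 (2 * 0) k = (cayley_gen 0 (2 * 0) k)^T.
  by apply/matrixP => i j; rewrite !mxE !mulr0 !mul0r !if_same !addr0 !add0r mulrAC.
have Ek : cayley_gen 0 (2 * 0) k *m y0 = (2 * dotT k y0) *: k.
  apply/matrixP => i j; rewrite !mxE sum3 !mxE dotE (ord1 j).
  by move: i; apply: ord3P; rewrite /= !mulr0 !addr0; ring.
by case: side; rewrite -?E Ek scaleNr.
Qed.

Lemma vanish_cayley_curve0 (R : realType) side (k y0 w : 'cV[R[i]]_3) d
    (F : {mpoly R[i][17]}) :
  F \is @ishomog1 17 R[i] d (@mdeg 17) -> vanish_iso F ->
  dotT k k = 0 -> dotT y0 y0 = 0 ->
  meval (fun j => cayley_curve side 0 k y0 w 0 j) F = 0.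
Proof.
move=> hF hV hk hy.
set c := fun j =>
  cayley_curve side 'X (map_mx polyC k) (map_mx polyC y0) (map_mx polyC w) 0 j.
have Ec z : meval (fun j => (c j).[z]) F = meval (fun j => cayley_curve side z k y0 w 0 j) F.
  have hC u : map_mx (horner_eval z) (map_mx polyC u) = u :> 'cV[R[i]]_3.
    by apply/matrixP => i j; rewrite !mxE horner_evalE hornerC.
  have -> : cayley_curve side z k y0 w = map_mx (horner_eval z)
      (cayley_curve side 'X (map_mx polyC k) (map_mx polyC y0) (map_mx polyC w)).
    by rewrite map_cayley_curve !hC; congr cayley_curve; exact/esym/hornerX.
  by apply: meval_eq => j; rewrite mxE.
rewrite -Ec; apply: (meval_curve_eq0 (h := c)) => n.
rewrite Ec cayley_curve_pt ?pnatr_eq0 // (meval_scale _ _ hF).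
by rewrite (vanish_cayley_pt _ _ _ hF hV) mulr0.
Qed.

Lemma vanish_coll_pt (R : realType) side (x : 'cV[R[i]]_3) (r : R[i]) d
    (F : {mpoly R[i][17]}) :
  dotT x x = 0 -> x != 0 -> F \is @ishomog1 17 R[i] d (@mdeg 17) -> vanish_iso F ->
  meval (fun k => coll_pt side x r 0 k) F = 0.
Proof.
move=> hx hx0 hF hV.
set n := dotT x (map_mx conjc x).
have hn : n != 0 by exact: dot_conj_neq0.
set y0 := (- (2 * n)^-1) *: map_mx conjc x.
have hy : dotT y0 y0 = 0 by rewrite /y0 dotZl dotZr -rmorph_dotT hx rmorph0 !mulr0.
have E1 : - (2 * dotT x y0) = 1 by rewrite /y0 dotZr -/n; field.
have E2 : 2 * dotT y0 ((- r) *: x) = r.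
  by rewrite /y0 dotZl dotZr (dotC _ x) -/n; field.
have := vanish_cayley_curve0 side ((- r) *: x) hF hV hx hy.
by rewrite cayley_curve0 E1 scale1r E2.
Qed.

Definition isotropy_form (R : realType) (side : bool) : {mpoly R[i][17]} :=
  let o := if side then 13%N else 10%N in
  'X_(inord o) * 'X_(inord o) + 'X_(inord (o + 1)) * 'X_(inord (o + 1))
  + 'X_(inord (o + 2)) * 'X_(inord (o + 2)) - 'X_(inord 0) * 'X_(inord 16).

Lemma isotropy_form_homog (R : realType) side :
  isotropy_form R side \is @ishomog1 17 R[i] 2 (@mdeg 17).
Proof.
have hX (i : 'I_17) : ('X_i : {mpoly R[i][17]}) \is @ishomog1 17 R[i] 1 (@mdeg 17).
  by rewrite dhomogX; apply/eqP; exact: mdeg1.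
rewrite /isotropy_form; apply: rpredB; first apply: rpredD; first apply: rpredD.
all: exact: (dhomogM (hX _) (hX _)).
Qed.

Lemma isotropy_formE (R : realType) side (v : 'rV[R[i]]_17) :
  meval (fun k => v 0 k) (isotropy_form R side) =
  dotT (if side then pyT v else pxT v) (if side then pyT v else pxT v) - phT v * prT v.
Proof.
by rewrite /isotropy_form dotE; case: side; rewrite !mevalB !mevalD !mevalM !mevalXU !mxE.
Qed.

Lemma vanish_isotropy_form (R : realType) side : vanish_iso (isotropy_form R side).
Proof.
move=> M y [hM _]; rewrite isotropy_formE /iso_pt mkptE ph_mk pr_mk px_mk py_mk mul1r.
apply/eqP; rewrite subr_eq0; apply/eqP.
have hC u : vC u = map_mx (real_complex R) u by [].
rewrite (_ : toC (rdot y y) = real_complex R (dotT y y)) // !hC.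
case: side; rewrite -rmorph_dotT //; congr (real_complex R _).
by rewrite dotNN dot_orthogonal // trmxK mulmx1C.
Qed.

Definition coll (R : realType) (side : bool) (b : 'rV[R[i]]_17) : Prop :=
  if side then right_coll b else left_coll b.

Definition coll_vec (R : realType) (side : bool) (b : 'rV[R[i]]_17) : 'cV[R[i]]_3 :=
  if side then py b else px b.

Lemma inB_isotropic (R : realType) side (b : 'rV[R[i]]_17) :
  inB b -> dotT (coll_vec side b) (coll_vec side b) = 0.
Proof.
case=> [[_ hX] hh].
have := hX 2%N _ (@isotropy_form_homog R side) (@vanish_isotropy_form R side).
by rewrite isotropy_formE -phE hh mul0r subr0 /coll_vec pxE pyE; case: side.
Qed.

Section Collinearity.
Variables (R : realType) (side : bool).
Implicit Types (b : 'rV[R[i]]_17) (x : 'cV[R[i]]_3) (r c : R[i]).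

Lemma coll_vec_coll_pt x r : coll_vec side (coll_pt side x r) = x.
Proof. by rewrite /coll_vec /coll_pt pyE pxE; case: side; rewrite ?py_mk ?px_mk. Qed.

Lemma pr_coll_pt x r : pr (coll_pt side x r) = r.
Proof. by rewrite /coll_pt prE; case: side; rewrite pr_mk. Qed.

Lemma coll_vecZ c b : coll_vec side (c *: b) = c *: coll_vec side b.
Proof. by rewrite /coll_vec; case: side; rewrite ?pxZ ?pyZ. Qed.

Lemma coll_ptZ c x r : c *: coll_pt side x r = coll_pt side (c *: x) (c * r).
Proof. by rewrite /coll_pt; case: side; rewrite scale_mkptT !mulr0 !scaler0. Qed.

Lemma coll_inB b : coll side b -> inB b.
Proof. by rewrite /coll; case: side => -[]. Qed.

Lemma coll_isotropic b : coll side b -> dotT (coll_vec side b) (coll_vec side b) = 0.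
Proof. by move/coll_inB/(inB_isotropic side). Qed.

Lemma coll_vec_neq0 b : coll side b -> coll_vec side b != 0.
Proof. by rewrite /coll /coll_vec; case: side => -[_ [_ []]]. Qed.

Lemma coll_eta b : coll side b -> b = coll_pt side (coll_vec side b) (pr b).
Proof.
move=> hb; rewrite {1}(mkptT_eta b) -phE -pME -pxE -pyE -prE; move: hb.
by rewrite /coll /coll_vec /coll_pt; case: side => -[[_ ->] [-> []]] => [-> _ | _ ->].
Qed.

Lemma coll_ptP x r : dotT x x = 0 -> x != 0 -> coll side (coll_pt side x r).
Proof.
move=> hx hx0.
have hB : inB (coll_pt side x r).
  split; last by rewrite /coll_pt phE; case: side; rewrite ph_mk.
  split=> [|d F hF hV]; last exact: vanish_coll_pt hx hx0 hF hV.
  apply: contraNneq hx0 => h0; rewrite -(coll_vec_coll_pt x r) h0 /coll_vec.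
  by case: side; apply/eqP/matrixP => i j; rewrite !mxE.
rewrite /coll; case: side hB => hB; (split; first done);
  by rewrite /coll_pt pME pxE pyE pM_mk px_mk py_mk.
Qed.

Lemma pseudo_sph_coll b p P : coll side b ->
  (pseudo_sph b p P <-> pr b = 2 * dotT (vC (if side then P else p)) (coll_vec side b)).
Proof.
rewrite /coll /coll_vec /pseudo_sph cdotE.
case: side => -[_ [-> []]] => [-> _ | _ ->];
  rewrite mul0mx !dot0l ?dot0r !mulr0 !subr0 ?(dotC (py b));
  by split => [/eqP | ->]; [rewrite subr_eq0 => /eqP | rewrite subrr].
Qed.

End Collinearity.

(** * Oriented lines *)

Definition x_axis (R : realType) : oline R.
Proof.
exists (\col_(i < 3) (i == 0 :> nat)%:R, 0).
by rewrite rdotE /= !dotE !mxE /= !mulr0 mulr1 !addr0 !eqxx.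
Defined.

(* For [z = u + i v] nonzero isotropic: the line with direction [u x v / |u|^2]
   through [(Re r u + Im r v) / (2 |u|^2)]; for other [z] the junk value [x_axis]. *)
Definition line_of (R : realType) (z : 'cV[R[i]]_3) (r : R[i]) : oline R :=
  insubd (x_axis R) ((dotT (reV z) (reV z))^-1 *: crossv (reV z) (imV z),
     (complex.Re r / (2 * dotT (reV z) (reV z))) *: reV z
     + (complex.Im r / (2 * dotT (reV z) (reV z))) *: imV z).

(* The equality case of [a e - b g <= (a^2 + b^2 + g^2 + e^2) / 2]. *)
Lemma equal_norm_cross_eq (F : realDomainType) (a b g e : F) :
  a ^+ 2 + b ^+ 2 = g ^+ 2 + e ^+ 2 -> a * e - b * g = a ^+ 2 + b ^+ 2 ->
  g = - b /\ e = a.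
Proof.
move=> hn hd.
have /eqP : (g + b) ^+ 2 + (e - a) ^+ 2 = 0.
  transitivity (g ^+ 2 + e ^+ 2 + (a ^+ 2 + b ^+ 2) - 2 * (a * e - b * g)); first ring.
  by rewrite -hn hd; ring.
rewrite paddr_eq0 ?sqr_ge0 // !sqrf_eq0 addr_eq0 subr_eq0.
by case/andP=> /eqP -> /eqP ->.
Qed.

Section LineOf.
Variable R : realType.
Implicit Types (u v w : 'cV[R]_3).

Lemma line_of_val u v r1 r2 :
  dotT u u = dotT v v -> dotT u v = 0 -> dotT u u != 0 ->
  val (line_of (cplx u v) (Complex r1 r2)) =
  ((dotT u u)^-1 *: crossv u v, (r1 / (2 * dotT u u)) *: u + (r2 / (2 * dotT u u)) *: v).
Proof.
move=> huu huv hm; rewrite /line_of reV_cplx imV_cplx insubdK //=.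
rewrite unfold_in /= rdotE !dotZl !dotZr dot_cross_cross dotDr !dotZr dot_cross_l
  dot_cross_r -huu huv.
by apply/andP; split; apply/eqP; [field | ring].
Qed.

Lemma on_line_of_cplx u v r1 r2 p :
  dotT u u = dotT v v -> dotT u v = 0 -> dotT u u != 0 ->
  on_line p (line_of (cplx u v) (Complex r1 r2)) <->
  r1 = 2 * dotT p u /\ r2 = 2 * dotT p v.
Proof.
move=> huu huv hm; rewrite /on_line line_of_val //=.
have hvu : dotT v u = 0 by rewrite dotC.
have hcc : dotT (crossv u v) (crossv u v) = dotT u u * dotT u u.
  by rewrite dot_cross_cross -huu huv expr0n /= subr0.
split=> [[t ->] | [h1 h2]].
  by rewrite !dotDl !dotZl dot_cross_l dot_cross_r hvu huv -huu; split; field.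
exists ((dotT u u)^-1 * dotT (crossv u v) p).
apply/eqP; rewrite -subr_eq0; apply/eqP; apply: (orthogonal_cross_eq0 (u := u) (v := v)).
- by rewrite !dotBl !dotDl !dotZl dot_cross_l hvu h1; field.
- by rewrite !dotBl !dotDl !dotZl dot_cross_r huv h2 -huu; field.
- by rewrite !dotBr !dotDr !dotZr hcc dot_cross_l dot_cross_r; field.
- by rewrite hcc mulf_neq0.
Qed.

Lemma on_line_of (z : 'cV[R[i]]_3) r p :
  dotT z z = 0 -> z != 0 -> on_line p (line_of z r) <-> r = 2 * dotT (vC p) z.
Proof.
rewrite -(cplx_eta z); case: r => r1 r2 hz hz0.
have [huu huv hm] := isotropic_cplx hz hz0.
rewrite vC_cplx dot_cplx !dot0l !subr0 !addr0 -[2 * _]/(Complex _ _) on_line_of_cplx //.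
by split=> [[-> ->] | [-> ->]]; [congr Complex | split]; ring.
Qed.

Lemma on_line_foot (l : oline R) : on_line (val l).2 l.
Proof. by exists 0; rewrite scale0r addr0. Qed.

Lemma oline_eq (l1 l2 : oline R) :
  (val l1).1 = (val l2).1 -> (forall p, on_line p l1 <-> on_line p l2) -> l1 = l2.
Proof.
move=> hd hl; apply: val_inj.
have [t ht] := (hl _).1 (on_line_foot l1); clear hl.
move: hd ht; case: l1 => [[d1 a1] /= /andP[/eqP h11 /eqP h12]].
case: l2 => [[d2 a2] /= /andP[/eqP h21 /eqP h22]] /= hd ht.
rewrite !rdotE -hd in h11 h12 h21 h22 ht.
have : dotT d1 a1 = dotT d1 (a2 + t *: d1) by rewrite -ht.
rewrite dotDr dotZr h12 h22 h11 add0r mulr1 => ht0.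
by rewrite hd ht -ht0 scale0r addr0.
Qed.

Lemma line_ofZ (z : 'cV[R[i]]_3) r (c : R[i]) :
  dotT z z = 0 -> z != 0 -> c != 0 -> line_of (c *: z) (c * r) = line_of z r.
Proof.
move=> hz hz0 hc.
have hz' : dotT (c *: z) (c *: z) = 0 by rewrite dotZl dotZr hz !mulr0.
have hz0' : c *: z != 0 by rewrite scaler_eq0 negb_or hc.
apply: oline_eq; last first.
  move=> p; rewrite !on_line_of // dotZr; split => [h | ->]; last by ring.
  by apply: (mulfI hc); rewrite h; ring.
move: hz hz0 hz' hz0'; rewrite -(cplx_eta z); case: c hc => c1 c2 hc.
rewrite scale_cplx; case: r => r1 r2 hz hz0 hz' hz0'.
have [huu huv hm] := isotropic_cplx hz hz0.
have [huu' huv' hm'] := isotropic_cplx hz' hz0'.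
rewrite -[Complex c1 c2 * _]/(Complex _ _) !line_of_val //=.
have hcc : c1 ^+ 2 + c2 ^+ 2 != 0.
  by apply: contra_neq hc => h0; congr Complex; nra.
rewrite -scaleNr cross_lin !dotDl !dotDr !dotZl !dotZr (dotC (imV z)) huv -huu scalerA.
congr (_ *: _); field.
rewrite hm /= (_ : _ + _ = (c1 ^+ 2 + c2 ^+ 2) * dotT (reV z) (reV z)); last by ring.
by rewrite mulf_neq0.
Qed.

Lemma cplx_frame_decomp u v w :
  dotT u u = dotT v v -> dotT u v = 0 -> dotT u u != 0 -> dotT (crossv u v) w = 0 ->
  w = (dotT w u / dotT u u) *: u + (dotT w v / dotT u u) *: v.
Proof.
move=> huu huv hm hw; apply/eqP; rewrite -subr_eq0; apply/eqP.
have hvu : dotT v u = 0 by rewrite dotC.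
have hcc : dotT (crossv u v) (crossv u v) = dotT u u * dotT u u.
  by rewrite dot_cross_cross -huu huv expr0n /= subr0.
apply: (orthogonal_cross_eq0 (u := u) (v := v)).
- by rewrite !dotBl !dotDl !dotZl hvu; field.
- by rewrite !dotBl !dotDl !dotZl huv -huu; field.
- by rewrite !dotBr !dotDr !dotZr dot_cross_l dot_cross_r hw; ring.
- by rewrite hcc mulf_neq0.
Qed.

Lemma line_of_dir_inj u v u' v' :
  dotT u u = dotT v v -> dotT u v = 0 -> dotT u u != 0 ->
  dotT u' u' = dotT v' v' -> dotT u' v' = 0 -> dotT u' u' != 0 ->
  (dotT u u)^-1 *: crossv u v = (dotT u' u')^-1 *: crossv u' v' ->
  exists2 c : R[i], c != 0 & cplx u' v' = c *: cplx u v.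
Proof.
move=> huu huv hm huu' huv' hm' hd.
have hcc : dotT (crossv u v) (crossv u v) = dotT u u ^+ 2.
  by rewrite dot_cross_cross -huu huv expr0n /= subr0 expr2.
have hc0 : crossv u v != 0.
  by apply: contra_neq hm => c0; apply/eqP; rewrite -sqrf_eq0 -hcc c0 dot0l.
have hc : crossv u v = (dotT u u / dotT u' u') *: crossv u' v'.
  by rewrite -scalerA -hd scalerA divff // scale1r.
have [a [b eu']] : exists a b, u' = a *: u + b *: v.
  exists (dotT u' u / dotT u u), (dotT u' v / dotT u u).
  by apply: cplx_frame_decomp; rewrite // hc dotZl dot_cross_l mulr0.
have [g [e ev']] : exists g e, v' = g *: u + e *: v.
  exists (dotT v' u / dotT u u), (dotT v' v / dotT u u).
  by apply: cplx_frame_decomp; rewrite // hc dotZl dot_cross_r mulr0.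
have Enorm a' b' : dotT (a' *: u + b' *: v) (a' *: u + b' *: v) =
    (a' ^+ 2 + b' ^+ 2) * dotT u u.
  by rewrite !dotDl !dotDr !dotZl !dotZr (dotC v) huv -huu; ring.
move: huu' hm' hc; rewrite eu' ev' !Enorm cross_lin scalerA => huu' hm' hc.
have hab : a ^+ 2 + b ^+ 2 != 0 by apply: contraNneq hm' => ->; rewrite mul0r.
have /eqP : (1 - dotT u u / ((a ^+ 2 + b ^+ 2) * dotT u u) * (a * e - b * g))
    *: crossv u v = 0.
  by rewrite scalerBl scale1r -hc subrr.
rewrite scaler_eq0 (negbTE hc0) orbF subr_eq0 => /eqP hdet.
have [hg he] : g = - b /\ e = a.
  apply: equal_norm_cross_eq; first by apply: (mulIf hm); exact: huu'.
  by rewrite -[RHS]mulr1 hdet; field; rewrite hab hm.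
exists (Complex a (- b)); last by rewrite scale_cplx hg he !scaleNr opprK.
apply: contra_neq hab => -[-> /eqP]; rewrite oppr_eq0 => /eqP ->.
by rewrite expr0n /= addr0.
Qed.

Lemma line_of_inj (z z' : 'cV[R[i]]_3) r r' :
  dotT z z = 0 -> z != 0 -> dotT z' z' = 0 -> z' != 0 ->
  line_of z r = line_of z' r' -> exists2 c : R[i], c != 0 & z' = c *: z /\ r' = c * r.
Proof.
move=> hz hz0 hz' hz0' h.
have [c hc ez] : exists2 c : R[i], c != 0 & z' = c *: z.
  move: hz hz0 hz' hz0' h; rewrite -(cplx_eta z) -(cplx_eta z').
  case: r => r1 r2; case: r' => r1' r2' hz hz0 hz' hz0' h.
  have [huu huv hm] := isotropic_cplx hz hz0.
  have [huu' huv' hm'] := isotropic_cplx hz' hz0'.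
  have := congr1 (fun l => (val l).1) h; rewrite /= !line_of_val // => hd.
  exact: line_of_dir_inj.
exists c => //; split => //.
have := on_line_foot (line_of z r); rewrite [X in X -> _]on_line_of // => e1.
have := on_line_foot (line_of z r); rewrite {2}h on_line_of // => ->.
by rewrite ez dotZr [in RHS]e1; ring.
Qed.

Lemma exists_orthogonal (d : 'cV[R]_3) : exists2 u, dotT u d = 0 & dotT u u != 0.
Proof.
have [/andP[/eqP d1 /eqP d2] | hd] := boolP ((d i1 0 == 0) && (d i2 0 == 0)).
  exists (\col_(i < 3) (i == 1 :> nat)%:R); rewrite !dotE !mxE /= ?d1; first ring.
  by rewrite !mul0r add0r addr0 mulr1 oner_neq0.
exists (\col_(i < 3) (if (i == 1 :> nat) then d i2 0 else if (i == 2 :> nat)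
  then - d i1 0 else 0)); rewrite !dotE !mxE /=; first ring.
rewrite mul0r add0r mulrNN -!expr2 paddr_eq0 ?sqr_ge0 // !sqrf_eq0.
by rewrite andbC.
Qed.

Lemma line_of_surj (l : oline R) :
  exists z, exists r, [/\ dotT z z = 0, z != 0 & line_of z r = l].
Proof.
case: l => [[d a] H]; have /andP[/eqP hdd /eqP hda] := H; rewrite /= !rdotE in hdd hda.
have [u hud hu0] := exists_orthogonal d.
set v := crossv d u.
have hdu : dotT d u = 0 by rewrite dotC.
have hvv : dotT u u = dotT v v by rewrite dot_cross_cross hdd hdu expr0n /= subr0 mul1r.
have huv : dotT u v = 0 by rewrite dotC dot_cross_r.
have hdv : dotT d v = 0 by rewrite dotC dot_cross_l.
have hcr : crossv u v = dotT u u *: d by rewrite cross_cross hud scale0r subr0.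
have hcc : dotT (crossv u v) (crossv u v) = dotT u u * dotT u u.
  by rewrite dot_cross_cross -hvv huv expr0n /= subr0.
exists (cplx u v), (Complex (2 * dotT a u) (2 * dotT a v)); split.
- by rewrite dot_cplx hvv subrr huv (dotC v) huv addr0.
- apply: contra_neq hu0 => h0.
  by rewrite -(reV_cplx u v) h0 (_ : reV 0 = 0) ?dot0l //; apply/matrixP => i j; rewrite !mxE.
apply: oline_eq; first by rewrite line_of_val //= hcr scalerA mulVf // scale1r.
move=> p; rewrite on_line_of_cplx // /on_line /=; split.
- case=> h1 h2; exists (dotT d (p - a)).
  apply/eqP; rewrite -subr_eq0; apply/eqP; apply: (orthogonal_cross_eq0 (u := u) (v := v)).
  + by rewrite !dotBl !dotDl dotZl (dotC d u) hud; lra.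
  + by rewrite !dotBl !dotDl dotZl hdv; lra.
  + by rewrite hcr !dotZl !dotBr !dotDr !dotZr hdd hda; ring.
  + by rewrite hcc mulf_neq0.
- by case=> t ->; rewrite !dotDl !dotZl hdu hdv !mulr0 !addr0; split; ring.
Qed.

End LineOf.

Lemma coll_line_bijection (R : realType) (side : bool) :
  exists g : 'rV[R[i]]_17 -> oline R,
    [/\ forall b b', coll side b -> coll side b' -> (g b = g b' <-> proj_eq b b'),
        forall l : oline R, exists2 b, coll side b & g b = l &
        forall b, coll side b -> forall p P : 'cV[R]_3,
          pseudo_sph b p P <-> on_line (if side then P else p) (g b)].
Proof.
exists (fun b => line_of (coll_vec side b) (pr b)); split.
- move=> b b' hb hb'; split.
  + have := line_of_inj (coll_isotropic hb) (coll_vec_neq0 hb) (coll_isotropic hb')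
      (coll_vec_neq0 hb').
    move=> /[apply] -[c hc [e1 e2]]; exists c => //.
    by rewrite (coll_eta hb') e1 e2 -coll_ptZ -(coll_eta hb).
  + by case=> c hc ->; rewrite coll_vecZ prZ line_ofZ ?(coll_isotropic hb) ?coll_vec_neq0.
- move=> l; have [z [r [hz hz0 <-]]] := line_of_surj l.
  exists (coll_pt side z r); first exact: coll_ptP.
  by rewrite coll_vec_coll_pt pr_coll_pt.
- move=> b hb p P /=.
  by rewrite (pseudo_sph_coll p P hb) on_line_of ?(coll_isotropic hb) ?coll_vec_neq0.
Qed.

Theorem mainTheorem6 (R : realType) :
  (exists g : 'rV[R[i]]_17 -> oline R,
     (forall b b', left_coll b -> left_coll b' -> (g b = g b' <-> proj_eq b b')) /\
     (forall l : oline R, exists2 b, left_coll b & g b = l) /\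
     (forall b, left_coll b -> forall p P : 'cV[R]_3,
        pseudo_sph b p P <-> on_line p (g b)))
  /\
  (exists g : 'rV[R[i]]_17 -> oline R,
     (forall b b', right_coll b -> right_coll b' -> (g b = g b' <-> proj_eq b b')) /\
     (forall l : oline R, exists2 b, right_coll b & g b = l) /\
     (forall b, right_coll b -> forall p P : 'cV[R]_3,
        pseudo_sph b p P <-> on_line P (g b))).
Proof.
by split; [have [g [inj surj sph]] := coll_line_bijection R false
          | have [g [inj surj sph]] := coll_line_bijection R true]; exists g.
Qed.
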